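(* Let $n,a,b,t\ge0$ be integers, $P=(0,n)$, and let $\mu\in L(\Delta_n;a,b)$ be a lattice path passing through the point $P+(-t,t)$. Then \[ \sum_{T\in\mathcal{TD}(\Delta_{n}/\mu)} q^{\|T\|} =\begin{bmatrix} n+t\\ n\end{bmatrix}_q. \]
   Context: $\Delta_n$ is the lattice path from $(0,0)$ to $(n,n)$ consisting of $n$ up steps $(0,1)$ followed by $n$ down steps $(1,0)$. For integers $a,b\ge0$, let $O=(0,0)$, $N=(n,n)$, $A=O+(-a,a)$, $B=N+(-b,b)$, and $L(\Delta_n;a,b)$ the set of lattice paths with steps $(0,1),(1,0)$ from $A$ to $B$ never going below $\Delta_n$. For $\mu\in L(\Delta_n;a,b)$, $\Delta_n/\mu$ is the region bounded by $\Delta_n$, $\mu$ and segments $OA$, $NB$. A Dyck tile is an edge-connected set of unit cells with no $2\times2$ block whose cell centers, joined by unit up/right moves, form a translated Dyck path (a path with up/right unit steps never going below its starting diagonal, ending on it); its length is the length of that path. A truncated Dyck tile is obtained from a Dyck tile of positive length by cutting its northeast and southwest cells along their diagonals of slope $-1$ and removing the northeast half of the northeast cell and the southwest half of the southwest cell; its half-length is half the length of the original Dyck tile. A truncated Dyck tiling of a region $R=\lambda/\mu$ is a set $T$ of truncated Dyck tiles with disjoint interiors contained in $R$ such that (i) for each $\eta\in T$, if $(\eta+(1,-1))\cap R$ has nonempty interior then another tile of $T$ contains $\eta+(1,-1)$, and (ii) no two tiles share a border segment of slope $-1$. $\mathcal{TD}(R)$ is their set; $\|T\|$ is the sum of half-lengths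 of its tiles. $\begin{bmatrix} m\\ k\end{bmatrix}_q=\frac{[m]_q!}{[k]_q![m-k]_q!}$ with $[m]_q=1+\dots+q^{m-1}$. *)

From HB Require Import structures.
From mathcomp Require Import all_boot all_order all_algebra.
From mathcomp Require Import fraction.
Set Implicit Arguments. Unset Strict Implicit. Unset Printing Implicit Defensive.
Import Order.TTheory GRing.Theory Num.Theory.

Local Open Scope ring_scope.

Definition point := (int * int)%type.

(* Rotated coordinates: h = x + y (position along the path),
   v = y - x (height in the Dyck-path picture). *)
Definition hcoord (p : point) : int := p.1 + p.2.
Definition vcoord (p : point) : int := p.2 - p.1.

(* A lattice path is a start point and a word of steps:
   true = up step (0,1), false = step (1,0).
   [pt p0 s i] is the point reached after the first i steps. *)
Definition pt (p0 : point) (s : seq bool) (i : nat) : point :=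
  (p0.1 + (count negb (take i s))%:Z, p0.2 + (count id (take i s))%:Z).

Definition Delta (n : nat) : seq bool := nseq n true ++ nseq n false.
Definition ptO : point := (0, 0).
Definition ptA (a : nat) : point := (- (a%:Z), a%:Z).
Definition ptB (n b : nat) : point := (n%:Z - b%:Z, n%:Z + b%:Z).

(* mu \in L(Delta_n; a, b): a path from A to B never going below Delta_n
   (below = smaller height v at the same position h; both paths start at h = 0). *)
Definition inL (n a b : nat) (mu : seq bool) : Prop :=
  pt (ptA a) mu (size mu) = ptB n b /\
  forall i : nat, (i <= size mu)%N ->
    vcoord (pt ptO (Delta n) i) <= vcoord (pt (ptA a) mu i).

Definition passes_through (p0 : point) (s : seq bool) (q : point) : Prop :=
  exists2 i : nat, (i <= size s)%N & pt p0 s i = q.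

(* The unit cell with lower-left corner c is cut along its
   diagonal of slope -1; (c, false) is its south-west half and (c, true)
   its north-east half.  All regions and tiles considered are unions of such
   half cells, so interiors / containment are described by sets of half cells. *)
Definition halfcell := (point * bool)%type.

(* A half cell of the cell c
   has a vertical (in the rotated picture) side at h = hcoord c + 1, from height
   vcoord c - 1 to vcoord c + 1, and lies in the strip [h-1,h] (SW half) or
   [h,h+1] (NE half).  It lies in the region bounded by Delta_n, mu, OA, NB
   iff its strip lies within 0 <= h <= 2n and that side lies between
   Delta_n and mu. *)
Definition in_region (n a : nat) (mu : seq bool) (hc : halfcell) : Prop :=
  let h := hcoord hc.1 + 1 in
  let v := vcoord hc.1 in
  (if hc.2 then (0 <= h) && (h < (2 * n)%:Z) else (1 <= h) && (h <= (2 * n)%:Z)) /\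
  vcoord (pt ptO (Delta n) `|h|%N) + 1 <= v /\
  v + 1 <= vcoord (pt (ptA a) mu `|h|%N).

Definition dyck_word (w : seq bool) : bool :=
  (count id w == count negb w) &&
  all (fun i => count negb (take i w) <= count id (take i w))%N (iota 0 (size w).+1).

(* A (truncated) Dyck tile: the cell of its south-west cell and the Dyck word
   formed by joining the cell centres.  Its cells are [tcell t i], i <= size t.2. *)
Definition tile := (point * seq bool)%type.
Definition tlen (t : tile) : nat := size t.2.
Definition tcell (t : tile) (i : nat) : point := pt t.1 t.2 i.

Definition valid_tile (t : tile) : bool := (0 < tlen t)%N && dyck_word t.2.

(* Half cells of the truncated tile: the NE half of the SW cell, both halves of
   the intermediate cells, the SW half of the NE cell. *)
Definition in_tile (t : tile) (hc : halfcell) : bool :=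
  has (fun i => (tcell t i == hc.1) && (if hc.2 then (i < tlen t)%N else (0 < i)%N))
      (iota 0 (tlen t).+1).

Definition shift_tile (t : tile) : tile := ((t.1.1 + 1, t.1.2 - 1), t.2).

(* the border segments of slope -1 of a truncated tile: the diagonals of its
   SW cell and of its NE cell (identified by the cell) *)
Definition diags (t : tile) : seq point := [:: tcell t 0; tcell t (tlen t)].

Definition half_length (t : tile) : nat := (tlen t)./2.

(* Truncated Dyck tilings of Delta_n / mu; a tiling (a finite set of tiles)
   is represented by a duplicate-free list of tiles. *)
Definition is_TD (n a : nat) (mu : seq bool) (T : seq tile) : Prop :=
  uniq T /\
  (forall t, t \in T -> valid_tile t) /\
  (forall t hc, t \in T -> in_tile t hc -> in_region n a mu hc) /\
  (forall t1 t2 hc, t1 \in T -> t2 \in T -> t1 != t2 ->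
      in_tile t1 hc -> in_tile t2 hc -> False) /\
  (forall t, t \in T ->
      (exists hc, in_tile (shift_tile t) hc /\ in_region n a mu hc) ->
      exists t', [/\ t' \in T, t' != t &
         forall hc, in_tile (shift_tile t) hc -> in_tile t' hc]) /\
  (forall t1 t2, t1 \in T -> t2 \in T -> t1 != t2 ->
      ~~ has (fun c => c \in diags t2) (diags t1)).

Definition tnorm (T : seq tile) : nat := (\sum_(t <- T) half_length t)%N.

Definition qint (m : nat) : {poly int} := \sum_(i < m) 'X^i.
Definition qfact (m : nat) : {poly int} := \prod_(i < m) qint i.+1.
Definition qbinom (m k : nat) : {fraction {poly int}} :=
  FracField.tofrac (qfact m) /
    (FracField.tofrac (qfact k) * FracField.tofrac (qfact (m - k))).

From HB Require Import structures.
From mathcomp Require Import all_boot all_order all_algebra.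
From mathcomp Require Import fraction zify ring.
From Stdlib Require Import Classical_Prop.
Import Order.TTheory GRing.Theory Num.Theory.
Local Open Scope ring_scope.
Set Implicit Arguments. Unset Strict Implicit.

(* The "level-k tile of half-length j" is the truncated Dyck tile of shape
   Delta_j centred under the peak of Delta_n and running parallel to it at
   height 2k - 1 ([ltile]).  The proof has four steps.
   1. Every tile of a tiling is a level tile ([TD_level_tile]): by induction
      on height, a tile either rests on Delta_n (level 1) or, by condition
      (i), its translate by (1,-1) lies in a level-k tile, forcing level k+1.
   2. A tiling has one tile per level, its levels are 1..m with m <= t (mu is
      at height n + 2t above the peak), and by condition (i) the half-lengths
      decrease with the level: sorted by level, a tiling is the level tiling
      of a partition with at most t parts, each at most n ([TD_partition]).
   3. Conversely the level tiling of such a partition is a tiling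
      ([level_tiling_TD]), of norm the size of the partition.
   4. The generating function of partitions in a t x n box satisfies the
      q-Pascal recursion, hence equals [n+t, n]_q ([box_gf_qbinom]). *)

Lemma count_steps (s : seq bool) : (count negb s + count id s = size s)%N.
Proof. by rewrite addnC count_predC. Qed.

Lemma hcoord_pt p w i : hcoord (pt p w i) = hcoord p + (minn i (size w))%:Z.
Proof. rewrite /hcoord /pt /= -size_take_min -count_steps. lia. Qed.

Lemma vcoord_pt p w i : vcoord (pt p w i) =
  vcoord p + (count id (take i w))%:Z - (count negb (take i w))%:Z.
Proof. rewrite /vcoord /pt /=. lia. Qed.

Lemma point_eq_hv (p q : point) :
  hcoord p = hcoord q -> vcoord p = vcoord q -> p = q.
Proof.
case: p => x y; case: q => x' y'; rewrite /hcoord /vcoord /= => *.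
congr pair; lia.
Qed.

Lemma pt_start p w : pt p w 0 = p.
Proof. by case: p => x y; rewrite /pt take0 /= !addr0. Qed.

Lemma pt_cons p x w i :
  pt p (x :: w) i.+1 = pt (p.1 + (~~ x : nat)%:Z, p.2 + (x : nat)%:Z) w i.
Proof. rewrite /pt /=; congr pair; case: x => /=; lia. Qed.

Lemma word_eq_from_points p w1 w2 : size w1 = size w2 ->
  (forall i, (i <= size w1)%N -> pt p w1 i = pt p w2 i) -> w1 = w2.
Proof.
elim: w1 p w2 => [|x w1 IH] p [|y w2] //= [Hs] H.
have H1 := H 1%N isT; rewrite !pt_cons !pt_start in H1.
case: H1 => _ Hxy.
have exy : x = y by case: x y Hxy {H IH} => [] [] //=; lia.
rewrite {}exy in H *; congr cons.
apply: (IH (p.1 + (~~ y : nat)%:Z, p.2 + (y : nat)%:Z) _ Hs) => i Hi.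
by have := H i.+1 Hi; rewrite !pt_cons.
Qed.

Lemma tile_eq_from_cells (t t' : tile) : tlen t = tlen t' ->
  (forall i, (i <= tlen t)%N -> tcell t i = tcell t' i) -> t = t'.
Proof.
case: t => p w; case: t' => p' w'; rewrite /tlen /tcell /= => Hs H.
have ep : p = p' by have := H 0%N isT; rewrite !pt_start.
subst p'; congr pair; exact: word_eq_from_points Hs H.
Qed.

Lemma in_tileP t hc : in_tile t hc <->
  exists i, [/\ (i <= tlen t)%N, tcell t i = hc.1 &
               (if hc.2 then (i < tlen t)%N else (0 < i)%N)].
Proof.
rewrite /in_tile; split.
  move/hasP => [i]; rewrite mem_iota add0n ltnS => Hi /andP [/eqP H1 H2].
  by exists i.
move=> [i [Hi H1 H2]]; apply/hasP; exists i; first by rewrite mem_iota add0n ltnS.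
by rewrite H1 eqxx.
Qed.

Lemma in_tile_cell t i : (0 < tlen t)%N -> (i <= tlen t)%N ->
  in_tile t (tcell t i, (i < tlen t)%N).
Proof.
move=> t0 Hi; apply/in_tileP; exists i; split=> //=.
by case: ltnP => // h; lia.
Qed.

Lemma in_tile_first t : (0 < tlen t)%N -> in_tile t (tcell t 0, true).
Proof. by move=> t0; have := in_tile_cell t0 (leq0n _); rewrite t0. Qed.

Lemma vcoord_lipschitz p w i j : (i <= j)%N ->
  vcoord (pt p w j) - vcoord (pt p w i) <= (j - i)%N%:Z /\
  - ((j - i)%N%:Z) <= vcoord (pt p w j) - vcoord (pt p w i).
Proof.
move=> Hij; rewrite !vcoord_pt -(subnKC Hij) takeD !count_cat.
have := count_steps (take (j - i) (drop i w)); rewrite size_take_min => Hs.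
have Hm : (minn (j - i) (size (drop i w)) <= j - i)%N by apply: geq_minl.
rewrite (subnKC Hij); split; lia.
Qed.

Lemma take_nseq_min m j (x : bool) : take m (nseq j x) = nseq (minn m j) x.
Proof.
case: (leqP m j) => H; first by rewrite take_nseq // (minn_idPl H).
by rewrite take_oversize ?size_nseq ?(ltnW H) // (minn_idPr (ltnW H)).
Qed.

Lemma count_take_Delta (i j : nat) :
  count id (take i (Delta j)) = minn i j /\
  count negb (take i (Delta j)) = minn (i - j) j.
Proof.
rewrite /Delta take_cat size_nseq; case: ltnP => H.
  rewrite take_nseq_min !count_nseq /=; split; lia.
rewrite take_nseq_min !count_cat !count_nseq /=; split; lia.
Qed.

Definition delta_height (n : nat) (h : int) : int :=
  if h <= n%:Z then h else n%:Z + n%:Z - h.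

Lemma vcoord_Delta n (h : int) : 0 <= h -> h <= n%:Z + n%:Z ->
  vcoord (pt ptO (Delta n) `|h|%N) = delta_height n h.
Proof.
move=> h0 h1; rewrite vcoord_pt.
have [c1 c2] := count_take_Delta `|h|%N n.
rewrite c1 c2 /delta_height /vcoord /ptO /=; case: ifP; lia.
Qed.

Lemma delta_height_ge0 n h : 0 <= h -> h <= n%:Z + n%:Z -> 0 <= delta_height n h.
Proof. rewrite /delta_height; case: ifP; lia. Qed.

Section UpperPath.
Variables (n a t : nat) (mu : seq bool).
Hypothesis muP : passes_through (ptA a) mu (- (t%:Z), n%:Z + t%:Z).

Lemma mu_height_peak : vcoord (pt (ptA a) mu n) = n%:Z + 2 * t%:Z.
Proof.
case: muP => i Hi He.
have Ein : i = n.
  have := congr1 hcoord He; rewrite hcoord_pt (minn_idPl Hi) /hcoord /ptA /=; lia.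
rewrite -Ein He /vcoord /=; lia.
Qed.

Lemma mu_above_Delta (h : int) : 0 <= h -> h <= n%:Z + n%:Z ->
  delta_height n h + 2 * t%:Z <= vcoord (pt (ptA a) mu `|h|%N).
Proof.
move=> h0 h1; have Hn := mu_height_peak.
rewrite /delta_height; case: ifP => Hh.
  have Hle : (`|h| <= n)%N by lia.
  have [L1 L2] := vcoord_lipschitz (ptA a) mu Hle; lia.
have Hle : (n <= `|h|)%N by lia.
have [L1 L2] := vcoord_lipschitz (ptA a) mu Hle; lia.
Qed.

End UpperPath.

Lemma in_region_bounds n a mu c s : in_region n a mu (c, s) ->
  [/\ 0 <= hcoord c + 1, hcoord c + 1 <= n%:Z + n%:Z,
      delta_height n (hcoord c + 1) + 1 <= vcoord c &
      vcoord c + 1 <= vcoord (pt (ptA a) mu `|(hcoord c + 1)%R|%N)].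
Proof.
rewrite /in_region /= => [[H1 [H2 H3]]].
have [h0 h1] : 0 <= hcoord c + 1 /\ hcoord c + 1 <= n%:Z + n%:Z.
  by move: H1; case: s => /andP []; lia.
by rewrite -vcoord_Delta.
Qed.

Lemma in_region_intro n a mu c s :
  (if s then (0 <= hcoord c + 1) && (hcoord c + 1 < (2 * n)%N%:Z)
   else (1 <= hcoord c + 1) && (hcoord c + 1 <= (2 * n)%N%:Z)) ->
  delta_height n (hcoord c + 1) + 1 <= vcoord c ->
  vcoord c + 1 <= vcoord (pt (ptA a) mu `|(hcoord c + 1)%R|%N) ->
  in_region n a mu (c, s).
Proof.
move=> H1 H2 H3.
have [h0 h1] : 0 <= hcoord c + 1 /\ hcoord c + 1 <= n%:Z + n%:Z.
  by move: H1; case: s => /andP []; lia.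
by rewrite /in_region /= vcoord_Delta.
Qed.

Lemma in_region_lower n a mu c c' s : in_region n a mu (c, s) ->
  hcoord c' = hcoord c -> delta_height n (hcoord c + 1) + 1 <= vcoord c' ->
  vcoord c' <= vcoord c -> in_region n a mu (c', s).
Proof.
move=> HR Eh H1 H2; have [S _] := HR.
have [_ _ _ H4] := in_region_bounds HR.
apply: in_region_intro; rewrite Eh //; lia.
Qed.

(* Parity: vcoord c and delta_height n (hcoord c + 1) + 1 have the same
   parity, so a cell less than two units above the lowest admissible height
   is at that height. *)
Lemma lowest_cell_height n (c : point) :
  delta_height n (hcoord c + 1) + 1 <= vcoord c ->
  vcoord c < delta_height n (hcoord c + 1) + 3 ->
  vcoord c = delta_height n (hcoord c + 1) + 1.
Proof. case: c => x y; rewrite /delta_height /hcoord /vcoord /=; case: ifP; lia. Qed.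

(* The level-k tile of half-length j: the truncated Dyck tile of shape
   Delta_j, occupying positions n-j .. n+j under the peak of Delta_n, whose
   cell centres run parallel to Delta_n at height 2k-1 above it. *)
Definition ltile (n : nat) (k : int) (j : nat) : tile :=
  ((- k, n%:Z - j%:Z + k - 1), Delta j).

Lemma tlen_ltile n k j : tlen (ltile n k j) = (j + j)%N.
Proof. by rewrite /tlen /= size_cat !size_nseq. Qed.

Lemma ltile_cell n k j i : (j <= n)%N -> (i <= j + j)%N ->
  hcoord (tcell (ltile n k j) i) + 1 = n%:Z - j%:Z + i%:Z /\
  vcoord (tcell (ltile n k j) i) = delta_height n (n%:Z - j%:Z + i%:Z) + 2 * k - 1.
Proof.
move=> Hj Hi; rewrite /tcell hcoord_pt vcoord_pt.
have [c1 c2] := count_take_Delta i j.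
rewrite c1 c2 /= size_cat !size_nseq /delta_height /hcoord /vcoord /=.
case: ifP; lia.
Qed.

Lemma ltile_inj n k1 j1 k2 j2 : ltile n k1 j1 = ltile n k2 j2 -> k1 = k2 /\ j1 = j2.
Proof.
move=> E; have E1 := congr1 (fun t : tile => t.1.1) E.
have E2 := congr1 (fun t : tile => size t.2) E.
move: E1 E2; rewrite /= !size_cat !size_nseq => E1 E2; split; lia.
Qed.

Lemma ltile_peak n k j : (1 <= j <= n)%N ->
  in_tile (ltile n k j) ((- k, n%:Z + k - 1), true).
Proof.
move=> /andP [j1 jn]; apply/in_tileP; exists j; rewrite tlen_ltile; split.
- by rewrite leq_addl.
- have [H1 H2] := ltile_cell k jn (leq_addl j j).
  by apply: point_eq_hv; move: H1 H2;
    rewrite /hcoord /vcoord /delta_height /=; case: ifP; lia.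
- rewrite /=; lia.
Qed.

Lemma ltile_cell_eq n k1 j1 i1 k2 j2 i2 : (j1 <= n)%N -> (i1 <= j1 + j1)%N ->
  (j2 <= n)%N -> (i2 <= j2 + j2)%N ->
  tcell (ltile n k1 j1) i1 = tcell (ltile n k2 j2) i2 ->
  k1 = k2 /\ j2%:Z - j1%:Z = i2%:Z - i1%:Z.
Proof.
move=> a1 b1 a2 b2 E.
have [H1 H2] := ltile_cell k1 a1 b1; have [H3 H4] := ltile_cell k2 a2 b2.
rewrite E in H1 H2; rewrite H1 in H3.
have Eh : n%:Z - j1%:Z + i1%:Z = n%:Z - j2%:Z + i2%:Z by lia.
rewrite H2 Eh in H4; split; lia.
Qed.

Lemma shift_tile_cell t i : hcoord (tcell (shift_tile t) i) = hcoord (tcell t i) /\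
  vcoord (tcell (shift_tile t) i) = vcoord (tcell t i) - 2.
Proof.
rewrite /tcell !hcoord_pt !vcoord_pt /shift_tile /hcoord /vcoord /=; split; lia.
Qed.

Lemma shift_ltile n k j : shift_tile (ltile n k j) = ltile n (k - 1) j.
Proof. by rewrite /shift_tile /ltile /=; congr ((_, _), _); lia. Qed.

Lemma ltile_valid n k j : (0 < j)%N -> valid_tile (ltile n k j).
Proof.
move=> j0; apply/andP; split; first by rewrite tlen_ltile; lia.
apply/andP; split; first by rewrite /= !count_cat !count_nseq /=; apply/eqP; lia.
apply/allP => i _; have [c1 c2] := count_take_Delta i j; rewrite /= c1 c2; lia.
Qed.

Lemma ltile_in_region n a mu (t k j : nat) :
  (forall h : int, 0 <= h -> h <= n%:Z + n%:Z ->
    delta_height n h + 2 * t%:Z <= vcoord (pt (ptA a) mu `|h|%N)) ->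
  (1 <= k <= t)%N -> (1 <= j <= n)%N ->
  forall hc, in_tile (ltile n k j) hc -> in_region n a mu hc.
Proof.
move=> above /andP [k1 kt] /andP [j1 jn] [c s] /in_tileP [i [Hi /= E Hs]].
rewrite tlen_ltile in Hi Hs.
have [C1 C2] := ltile_cell k jn Hi; rewrite E in C1 C2.
apply: in_region_intro.
- by rewrite C1; case: s Hs => Hs; apply/andP; split; lia.
- by rewrite C2 C1; lia.
- by rewrite C1 C2; have := above (n%:Z - j%:Z + i%:Z); lia.
Qed.

Lemma ltile_sub n k j j' hc : (j <= j')%N -> (j' <= n)%N ->
  in_tile (ltile n k j) hc -> in_tile (ltile n k j') hc.
Proof.
move=> jj jn /in_tileP [i [Hi E Hs]]; rewrite tlen_ltile in Hi Hs.
apply/in_tileP; exists (i + (j' - j))%N; rewrite tlen_ltile; split.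
- lia.
- rewrite -E; have jn' : (j <= n)%N by apply: leq_trans jn.
  have [A1 A2] := ltile_cell k jn' Hi.
  have Hi' : (i + (j' - j) <= j' + j')%N by lia.
  have [B1 B2] := ltile_cell k jn Hi'.
  apply: point_eq_hv; first lia.
  rewrite A2 B2; congr (delta_height n _ + _ - _); lia.
- by case: (hc.2) Hs => /=; lia.
Qed.

Lemma dyck_prefix w i : dyck_word w -> (i <= size w)%N ->
  (count negb (take i w) <= count id (take i w))%N.
Proof.
by move=> /andP [_ /allP H] Hi; apply: H; rewrite mem_iota add0n ltnS.
Qed.

Lemma dyck_balanced w : dyck_word w -> count id w = count negb w.
Proof. by case/andP=> /eqP. Qed.

Lemma hcoord_tcell t i : (i <= tlen t)%N -> hcoord (tcell t i) = hcoord t.1 + i%:Z.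
Proof. by move=> Hi; rewrite /tcell hcoord_pt (minn_idPl Hi). Qed.

Lemma tile_above_base t i : valid_tile t -> (i <= tlen t)%N ->
  vcoord t.1 <= vcoord (tcell t i).
Proof.
move=> /andP [_ D] Hi; rewrite /tcell vcoord_pt.
have := dyck_prefix D Hi; lia.
Qed.

(* A Dyck tile within the strip whose cells all run parallel to Delta_n at
   height 2k-1 above it ends at the same height as it starts, hence is
   symmetric about the peak: it is a level-k tile. *)
Lemma tile_parallel_Delta n (k : int) (t : tile) : valid_tile t ->
  0 <= hcoord t.1 + 1 -> hcoord t.1 + 1 + (tlen t)%:Z <= n%:Z + n%:Z ->
  (forall i, (i <= tlen t)%N ->
     vcoord (tcell t i) = delta_height n (hcoord (tcell t i) + 1) + 2 * k - 1) ->
  exists j, (1 <= j <= n)%N /\ t = ltile n k j.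
Proof.
move=> V s0 sL H.
have L0 : (0 < tlen t)%N by case/andP: V.
have E0 := H 0%N isT; have EL := H (tlen t) (leqnn _).
rewrite /tcell pt_start in E0.
have HvL : vcoord (tcell t (tlen t)) = vcoord t.1.
  rewrite /tcell vcoord_pt take_size; case/andP: V => _ /dyck_balanced ->; lia.
rewrite HvL hcoord_tcell // in EL.
have centred : (hcoord t.1 + 1) + (hcoord t.1 + 1) + (tlen t)%:Z = n%:Z + n%:Z.
  by move: E0 EL; rewrite /delta_height; case: ifP; case: ifP; lia.
set j := (n - `|(hcoord t.1 + 1)%R|)%N.
exists j; split; first by apply/andP; split; lia.
have Hj : (j <= n)%N by apply: leq_subr.
apply: tile_eq_from_cells => [|i Hi]; first by rewrite tlen_ltile; lia.
have Hi' : (i <= j + j)%N by lia.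
have [C1 C2] := ltile_cell k Hj Hi'.
apply: point_eq_hv; first by rewrite hcoord_tcell //; lia.
rewrite H // C2 hcoord_tcell //; congr (delta_height n _ + _ - _); lia.
Qed.

Lemma tile_over_ltile n k j (t : tile) : (j <= n)%N -> valid_tile t ->
  0 <= hcoord t.1 + 1 -> hcoord t.1 + 1 + (tlen t)%:Z <= n%:Z + n%:Z ->
  (forall hc, in_tile (shift_tile t) hc -> in_tile (ltile n k j) hc) ->
  exists j', (1 <= j' <= n)%N /\ t = ltile n (k + 1) j'.
Proof.
move=> jn V s0 sL Hsub; apply: tile_parallel_Delta => // i Hi.
have L0 : (0 < tlen t)%N by case/andP: V.
have /in_tileP [i' [Hi' E _]] := Hsub _ (@in_tile_cell (shift_tile t) i L0 Hi).
rewrite tlen_ltile in Hi'; rewrite /= in E.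
have [C1 C2] := ltile_cell k jn Hi'.
have [sh sv] := shift_tile_cell t i.
rewrite E sh in C1; rewrite E sv -C1 in C2; lia.
Qed.

Lemma tile_on_Delta n a mu (t : tile) : valid_tile t ->
  0 <= hcoord t.1 + 1 -> hcoord t.1 + 1 + (tlen t)%:Z <= n%:Z + n%:Z ->
  (forall i, (i <= tlen t)%N -> in_region n a mu (tcell t i, (i < tlen t)%N)) ->
  ~ (exists hc, in_tile (shift_tile t) hc /\ in_region n a mu hc) ->
  exists j, (1 <= j <= n)%N /\ t = ltile n 1 j.
Proof.
move=> V s0 sL cellR out; apply: tile_parallel_Delta => // i Hi.
have L0 : (0 < tlen t)%N by case/andP: V.
have R := cellR i Hi; have [_ _ low _] := in_region_bounds R.
have [sh sv] := shift_tile_cell t i.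
have not_lower : ~ (delta_height n (hcoord (tcell t i) + 1) + 1 <= vcoord (tcell t i) - 2).
  move=> H; apply: out; exists (tcell (shift_tile t) i, (i < tlen t)%N).
  split; first exact: in_tile_cell.
  apply: (in_region_lower R) => //; lia.
have := lowest_cell_height low; lia.
Qed.

Section TilingTiles.
Variables (n a : nat) (mu : seq bool) (T : seq tile).
Hypothesis TD : is_TD n a mu T.

Lemma TD_cell_in_region (t : tile) i : t \in T -> (i <= tlen t)%N ->
  in_region n a mu (tcell t i, (i < tlen t)%N).
Proof.
case: TD => _ [V [C _]] Ht Hi; apply: (C _ _ Ht).
by apply: in_tile_cell Hi; case/andP: (V t Ht).
Qed.

Lemma TD_tile_strip (t : tile) : t \in T ->
  0 <= hcoord t.1 + 1 /\ hcoord t.1 + 1 + (tlen t)%:Z <= n%:Z + n%:Z.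
Proof.
move=> Ht; have [a1 _ _ _] := in_region_bounds (TD_cell_in_region Ht (leq0n _)).
have [_ a2 _ _] := in_region_bounds (TD_cell_in_region Ht (leqnn _)).
rewrite /tcell pt_start in a1; rewrite hcoord_tcell // in a2.
by split=> //; rewrite addrAC.
Qed.

(* Every tile of a tiling is a level tile: by induction on the height of its
   south-west cell, using condition (i) of tilings. *)
Lemma TD_level_tile (t : tile) : t \in T ->
  exists k j : nat, [/\ (1 <= k)%N, (1 <= j <= n)%N & t = ltile n k%:Z j].
Proof.
have [_ [V [_ [_ [S _]]]]] := TD.
suff H N : forall t : tile, t \in T -> vcoord t.1 < N%:Z ->
    exists k j : nat, [/\ (1 <= k)%N, (1 <= j <= n)%N & t = ltile n k%:Z j].
  by move=> Ht; apply: (H (`|vcoord t.1|.+1)%N) => //; lia.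
elim: N => [|N IH] {}t Ht Hv.
  have [a1 a2 a3 _] := in_region_bounds (TD_cell_in_region Ht (leq0n _)).
  rewrite /tcell pt_start in a1 a2 a3; have := delta_height_ge0 a1 a2; lia.
have [s0 sL] := TD_tile_strip Ht.
have L0 : (0 < tlen t)%N by case/andP: (V t Ht).
case: (classic (exists hc, in_tile (shift_tile t) hc /\ in_region n a mu hc)).
  move=> /(S t Ht) [t' [Ht' _ Hsub]].
  have /in_tileP [i' [Hi' E' _]] := Hsub _ (@in_tile_first (shift_tile t) L0).
  have Hv' := tile_above_base (V t' Ht') Hi'; rewrite E' /= in Hv'.
  have [_ sv] := shift_tile_cell t 0; rewrite /tcell !pt_start in sv Hv'.
  have [k' [j' [k1 /andP [_ jn] Et']]] := IH t' Ht' ltac:(lia).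
  rewrite Et' in Hsub; have [j [Hj ->]] := tile_over_ltile jn (V t Ht) s0 sL Hsub.
  by exists k'.+1, j; split=> //; congr ltile; lia.
move=> out; have [j [Hj ->]] := tile_on_Delta (V t Ht) s0 sL
  (fun i => TD_cell_in_region Ht (i := i)) out.
by exists 1%N, j.
Qed.

End TilingTiles.

Fixpoint partition_le (b : nat) (p : seq nat) : bool :=
  if p is x :: p' then (0 < x <= b)%N && partition_le x p' else true.

Lemma partition_le_part b p i : partition_le b p -> (i < size p)%N ->
  (0 < nth 0 p i <= b)%N.
Proof.
elim: p b i => [|x p IH] b i //= /andP [/andP [x0 xb] P].
case: i => [|i] Hi /=; first by rewrite x0.
have /andP [-> /= H] := IH x i P Hi; exact: leq_trans H xb.
Qed.

Lemma partition_le_decr b p i : partition_le b p -> (i.+1 < size p)%N ->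
  (nth 0 p i.+1 <= nth 0 p i)%N.
Proof.
elim: p b i => [|x p IH] b i //= /andP [_ P].
case: i => [|i] Hi; last exact: IH x i P Hi.
by have /andP [] := partition_le_part (i := 0%N) P Hi.
Qed.

Lemma partition_leP b p : (forall i, (i < size p)%N -> (0 < nth 0 p i)%N) ->
  ((0 < size p)%N -> (nth 0 p 0 <= b)%N) ->
  (forall i, (i.+1 < size p)%N -> (nth 0 p i.+1 <= nth 0 p i)%N) ->
  partition_le b p.
Proof.
elim: p b => [|x p IH] b //= H0 Hb Hm.
rewrite (H0 0%N isT) (Hb isT) /=; apply: IH.
- by move=> i Hi; apply: (H0 i.+1).
- by move=> Hs; apply: (Hm 0%N).
- by move=> i Hi; apply: (Hm i.+1).
Qed.

Fixpoint level_tiling (n k : nat) (p : seq nat) : seq tile :=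
  if p is j :: p' then ltile n k%:Z j :: level_tiling n k.+1 p' else [::].

Lemma mem_level_tiling n k p (t : tile) : t \in level_tiling n k p <->
  exists2 i, (i < size p)%N & t = ltile n (k + i)%N%:Z (nth 0%N p i).
Proof.
elim: p k => [|j p IH] k /=; first by split=> // [[i]].
rewrite in_cons; split.
  case/orP => [/eqP ->|/(IH k.+1).1 [i Hi ->]]; first by exists 0%N; rewrite ?addn0.
  by exists i.+1; rewrite ?addnS.
move=> [[|i] Hi Et]; first by rewrite Et addn0 eqxx.
apply/orP; right; apply: (proj2 (IH k.+1)); exists i => //.
by rewrite Et addnS.
Qed.

Lemma size_level_tiling n k p : size (level_tiling n k p) = size p.
Proof. by elim: p k => //= j p IH k; rewrite IH. Qed.

Lemma uniq_level_tiling n k p : uniq (level_tiling n k p).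
Proof.
elim: p k => //= j p IH k; rewrite IH andbT.
by apply/negP => /mem_level_tiling [i _ /ltile_inj [E _]]; lia.
Qed.

Lemma tnorm_level_tiling n k p : tnorm (level_tiling n k p) = sumn p.
Proof.
elim: p k => [|j p IH] k; first by rewrite /tnorm big_nil.
by rewrite /= /tnorm big_cons -/(tnorm _) IH /half_length tlen_ltile addnn doubleK.
Qed.

Lemma level_tiling_perm_inj n p1 p2 :
  perm_eq (level_tiling n 1 p1) (level_tiling n 1 p2) -> p1 = p2.
Proof.
move=> P; have Hs := perm_size P; rewrite !size_level_tiling in Hs.
apply: (eq_from_nth (x0 := 0%N) Hs) => i Hi.
have H1 : ltile n (1 + i)%N%:Z (nth 0%N p1 i) \in level_tiling n 1 p1.
  by apply/mem_level_tiling; exists i.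
rewrite (perm_mem P) in H1.
have [i' Hi' /ltile_inj [E1 ->]] := (mem_level_tiling _ _ _ _).1 H1.
by congr nth; lia.
Qed.

Section LevelTiling.
Variables (n a t : nat) (mu : seq bool) (p : seq nat).
Hypothesis above : forall h : int, 0 <= h -> h <= n%:Z + n%:Z ->
  delta_height n h + 2 * t%:Z <= vcoord (pt (ptA a) mu `|h|%N).
Hypothesis size_p : (size p <= t)%N.
Hypothesis part_p : partition_le n p.

Let part i : (i < size p)%N -> (0 < nth 0 p i <= n)%N := partition_le_part part_p.

Lemma level_tiling_cell_eq i1 i2 l1 l2 : (i1 < size p)%N -> (i2 < size p)%N ->
  (l1 <= nth 0 p i1 + nth 0 p i1)%N -> (l2 <= nth 0 p i2 + nth 0 p i2)%N ->
  tcell (ltile n (1 + i1)%N%:Z (nth 0%N p i1)) l1 =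
  tcell (ltile n (1 + i2)%N%:Z (nth 0%N p i2)) l2 -> i1 = i2.
Proof.
move=> Hi1 Hi2 L1 L2 E.
have /andP [_ n1] := part Hi1; have /andP [_ n2] := part Hi2.
by have [Ek _] := ltile_cell_eq n1 L1 n2 L2 E; lia.
Qed.

Lemma level_tiling_in_region (t0 : tile) hc : t0 \in level_tiling n 1 p ->
  in_tile t0 hc -> in_region n a mu hc.
Proof.
move=> /mem_level_tiling [i Hi ->]; apply: (ltile_in_region above).
- by apply/andP; split; lia.
- exact: part.
Qed.

Lemma level_tiling_disjoint (t1 t2 : tile) hc :
  t1 \in level_tiling n 1 p -> t2 \in level_tiling n 1 p -> t1 != t2 ->
  in_tile t1 hc -> in_tile t2 hc -> False.
Proof.
move=> /mem_level_tiling [i1 Hi1 ->] /mem_level_tiling [i2 Hi2 ->] Hne.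
move=> /in_tileP [l1 [L1 E1 _]] /in_tileP [l2 [L2 E2 _]].
rewrite !tlen_ltile in L1 L2.
have ei := level_tiling_cell_eq Hi1 Hi2 L1 L2 (etrans E1 (esym E2)).
by rewrite ei eqxx in Hne.
Qed.

(* Condition (i): the level-1 tile translated by (1,-1) falls below Delta_n;
   the level-(i+2) tile translated is the level-(i+1) tile of half-length
   p_(i+1) <= p_i, contained in the level-(i+1) tile of the tiling. *)
Lemma level_tiling_supported (t0 : tile) : t0 \in level_tiling n 1 p ->
  (exists hc, in_tile (shift_tile t0) hc /\ in_region n a mu hc) ->
  exists t', [/\ t' \in level_tiling n 1 p, t' != t0 &
    forall hc, in_tile (shift_tile t0) hc -> in_tile t' hc].
Proof.
move=> /mem_level_tiling [[|i] Hi ->].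
  move=> [[c s] [Hin Hr]]; rewrite shift_ltile in Hin.
  move/in_tileP: Hin => [l [L /= E _]]; rewrite tlen_ltile in L.
  have /andP [_ n1] := part Hi.
  have [_ C2] := ltile_cell ((1 + 0)%N%:Z - 1) n1 L.
  have [_ _ f2 _] := in_region_bounds Hr.
  have [C1 _] := ltile_cell ((1 + 0)%N%:Z - 1) n1 L.
  by rewrite -E C1 C2 in f2; lia.
move=> _; exists (ltile n (1 + i)%N%:Z (nth 0%N p i)); split.
- by apply/mem_level_tiling; exists i => //; lia.
- by apply/negP => /eqP /ltile_inj [H _]; lia.
move=> hc; rewrite shift_ltile.
have -> : (1 + i.+1)%N%:Z - 1 = (1 + i)%N%:Z by lia.
apply: ltile_sub; first exact: partition_le_decr part_p Hi.
by have /andP [] := part (ltnW Hi).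
Qed.

Lemma level_tiling_diags (t1 t2 : tile) :
  t1 \in level_tiling n 1 p -> t2 \in level_tiling n 1 p -> t1 != t2 ->
  ~~ has (fun c => c \in diags t2) (diags t1).
Proof.
move=> /mem_level_tiling [i1 Hi1 ->] /mem_level_tiling [i2 Hi2 ->] Hne.
apply/hasP => [[c Hc1 Hc2]].
suff ei : i1 = i2 by rewrite ei eqxx in Hne.
move: Hc1 Hc2; rewrite /diags !tlen_ltile !inE.
have cell_eq := level_tiling_cell_eq Hi1 Hi2.
by move=> /orP [] /eqP -> /orP [] /eqP /cell_eq; apply.
Qed.

Lemma level_tiling_TD : is_TD n a mu (level_tiling n 1 p).
Proof.
split; first exact: uniq_level_tiling.
split; first by move=> t0 /mem_level_tiling [i Hi ->];
  apply: ltile_valid; case/andP: (part Hi).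
split; first exact: level_tiling_in_region.
split; first exact: level_tiling_disjoint.
split; first exact: level_tiling_supported.
exact: level_tiling_diags.
Qed.

End LevelTiling.

Lemma down_closed_iota (L : seq nat) : uniq L -> (forall x, x \in L -> (0 < x)%N) ->
  (forall x, x \in L -> (1 < x)%N -> x.-1 \in L) -> perm_eq L (iota 1 (size L)).
Proof.
move=> U P D.
have down e x : x \in L -> (e < x)%N -> (x - e)%N \in L.
  elim: e x => [|e IH] x Hx He; first by rewrite subn0.
  have -> : (x - e.+1)%N = (x - e)%N.-1 by lia.
  by apply: D (IH x Hx (ltnW He)) _; lia.
have bound x : x \in L -> (x <= size L)%N.
  move=> Hx; rewrite -[X in (X <= _)%N](size_iota 1 x).
  apply: uniq_leq_size; first exact: iota_uniq.
  move=> y; rewrite mem_iota => Hy.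
  have -> : y = (x - (x - y))%N by lia.
  by apply: down => //; lia.
have sub : {subset L <= iota 1 (size L)}.
  by move=> x Hx; rewrite mem_iota; have := P x Hx; have := bound x Hx; lia.
have [_ E] := uniq_min_size U sub ltac:(by rewrite size_iota).
exact: uniq_perm U (iota_uniq _ _) E.
Qed.

Definition level (x : tile) : nat := `|- x.1.1|%N.
Definition hlen (x : tile) : nat := (tlen x)./2.

Lemma level_ltile n (k : nat) j : level (ltile n k%:Z j) = k.
Proof. rewrite /level /=; lia. Qed.

Lemma hlen_ltile n k j : hlen (ltile n k j) = j.
Proof. by rewrite /hlen tlen_ltile addnn doubleK. Qed.

Lemma level_tiling_of_levels n (s : seq tile) k :
  (forall x, x \in s -> x = ltile n (level x)%:Z (hlen x)) ->
  map level s = iota k (size s) -> s = level_tiling n k (map hlen s).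
Proof.
elim: s k => [|x s IH] k //= Hs [Ex Es].
rewrite -(IH k.+1) // => [|y Hy]; last by apply: Hs; rewrite inE Hy orbT.
by rewrite {1}(Hs x (mem_head _ _)) Ex.
Qed.

Section TilingLevels.
Variables (n a t : nat) (mu : seq bool) (T : seq tile).
Hypothesis muP : passes_through (ptA a) mu (- (t%:Z), n%:Z + t%:Z).
Hypothesis TD : is_TD n a mu T.

Lemma TD_ltile (x : tile) : x \in T ->
  [/\ x = ltile n (level x)%:Z (hlen x), (1 <= level x)%N & (1 <= hlen x <= n)%N].
Proof.
move=> Hx; have [k [j [k1 J ->]]] := TD_level_tile TD Hx.
by rewrite level_ltile hlen_ltile.
Qed.

(* At most one tile per level, since all level-k tiles share the peak half
   cell. *)
Lemma TD_level_inj : {in T &, injective level}.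
Proof.
have [_ [_ [_ [D _]]]] := TD.
move=> x y Hx Hy E; have [ex _ jx] := TD_ltile Hx; have [ey _ jy] := TD_ltile Hy.
case: (eqVneq x y) => // Hne; apply: False_ind.
apply: (D _ _ ((- (level x)%:Z, n%:Z + (level x)%:Z - 1), true) Hx Hy Hne).
- by rewrite {1}ex; exact: (ltile_peak (level x)%:Z jx).
- by rewrite {1}ey -E; exact: (ltile_peak (level x)%:Z jy).
Qed.

(* Levels are at most t: the peak half cell of a level-k tile lies below mu,
   which is at height n + 2t above the peak of Delta_n. *)
Lemma TD_level_le (x : tile) : x \in T -> (level x <= t)%N.
Proof.
have [_ [_ [C _]]] := TD.
move=> Hx; have [ex _ jx] := TD_ltile Hx.
have /in_region_bounds [_ _ _] := C _ _ Hx ltac:(rewrite {1}ex; exact: ltile_peak).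
have -> : `|(hcoord (- (level x)%:Z, n%:Z + (level x)%:Z - 1) + 1)%R|%N = n.
  by rewrite /hcoord /=; lia.
rewrite (mu_height_peak muP) /vcoord /=; lia.
Qed.

Lemma TD_support n' (x : tile) : x \in T -> level x = n'.+2 ->
  exists2 y, y \in T & level y = n'.+1 /\ (hlen x <= hlen y)%N.
Proof.
have [_ [_ [C [_ [S _]]]]] := TD.
move=> Hx Lx; have [ex _ /andP [j1 jn]] := TD_ltile Hx.
rewrite Lx in ex; set j := hlen x in ex j1 jn *.
have z : (0 <= j + j)%N by [].
have bot_in : in_tile (ltile n n'.+2%:Z j) (tcell (ltile n n'.+2%:Z j) 0, true).
  by apply: in_tile_first; rewrite tlen_ltile; lia.
have R0 := C _ _ Hx ltac:(rewrite {1}ex; exact: bot_in).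
have [A1 A2] := ltile_cell n'.+2%:Z jn z; have [B1 B2] := ltile_cell n'.+1%:Z jn z.
have R1 : in_region n a mu (tcell (ltile n n'.+1%:Z j) 0, true).
  by apply: (in_region_lower R0); [lia | rewrite A1 B2; lia | lia].
have shift_in : in_tile (shift_tile x) (tcell (ltile n n'.+1%:Z j) 0, true).
  rewrite ex shift_ltile; have -> : n'.+2%:Z - 1 = n'.+1%:Z by lia.
  by apply: in_tile_first; rewrite tlen_ltile; lia.
have [y [Hy _ /(_ _ shift_in) /in_tileP [i [Hi E _]]]] := S x Hx (ex_intro _ _ (conj shift_in R1)).
exists y => //; have [ey _ /andP [_ jy]] := TD_ltile Hy.
rewrite ey tlen_ltile in Hi E; rewrite /= in E.
have [Ek Ej] := ltile_cell_eq jy Hi jn z E.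
by split; lia.
Qed.

(* The half-lengths along a level tiling inside T form a partition with
   parts at most n: by condition (i) each tile sits on a longer one. *)
Lemma TD_partition_le p : {subset level_tiling n 1 p <= T} -> partition_le n p.
Proof.
move=> sub.
have inT i : (i < size p)%N -> ltile n (1 + i)%N%:Z (nth 0%N p i) \in T.
  by move=> Hi; apply: sub; apply/mem_level_tiling; exists i.
have hlen_p i : (i < size p)%N -> (1 <= nth 0 p i <= n)%N.
  by move=> /inT /TD_ltile [_ _]; rewrite hlen_ltile.
apply: partition_leP => [i /hlen_p /andP [] //|p0|i Hi].
  by have /andP [] := hlen_p 0%N p0.
have [y Hy [Ly Hle]] := TD_support (inT _ Hi) (level_ltile _ _ _).
have Ey : y = ltile n (1 + i)%N%:Z (nth 0%N p i).
  by apply: TD_level_inj Hy (inT _ (ltnW Hi)) _; rewrite Ly level_ltile.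
by rewrite Ey !hlen_ltile in Hle.
Qed.

Lemma TD_levels : perm_eq (map level T) (iota 1 (size T)).
Proof.
rewrite -(size_map level); apply: down_closed_iota.
- by rewrite map_inj_in_uniq; [case: TD | exact: TD_level_inj].
- by move=> _ /mapP [x Hx ->]; have [] := TD_ltile Hx.
move=> _ /mapP [x Hx ->] Lx; case E : (level x) Lx => [|[|k]] // _.
by have [y Hy [Ly _]] := TD_support Hx E; apply/mapP; exists y.
Qed.

Lemma TD_partition : exists p,
  [/\ (size p <= t)%N, partition_le n p & perm_eq T (level_tiling n 1 p)].
Proof.
set Ts := sort (relpre level leq) T.
have inT x : x \in Ts -> x \in T by rewrite mem_sort.
have levels : map level Ts = iota 1 (size Ts).
  rewrite -sort_map size_sort.
  apply: (sorted_eq leq_trans anti_leq).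
  - by apply: sort_sorted; exact: leq_total.
  - exact: iota_sorted.
  - by rewrite perm_sort TD_levels.
have E : Ts = level_tiling n 1 (map hlen Ts).
  by apply: level_tiling_of_levels => // x /inT /TD_ltile [].
exists (map hlen Ts); split.
- rewrite size_map; case: (posnP (size Ts)) => [-> //|Ts0].
  have : size Ts \in map level Ts by rewrite levels mem_iota; lia.
  by case/mapP => x /inT /TD_level_le Lx ->.
- by apply: TD_partition_le => x; rewrite -E; apply: inT.
- by rewrite -E perm_sym perm_sort.
Qed.

End TilingLevels.

(* [box_partitions t n] lists the partitions with at most t parts, each at
   most n: those whose parts are at most n - 1, followed by those whose first
   part is n, the rest fitting in a box (t - 1) x n. *)
Fixpoint box_partitions (t n : nat) {struct t} : seq (seq nat) :=
  if t is t'.+1 then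
    (fix with_largest (m : nat) : seq (seq nat) :=
       if m is m'.+1 then with_largest m' ++ map (cons m) (box_partitions t' m)
       else [:: [::]]) n
  else [:: [::]].

Lemma box_partitionsSS t n : box_partitions t.+1 n.+1 =
  box_partitions t.+1 n ++ map (cons n.+1) (box_partitions t n.+1).
Proof. by []. Qed.

Lemma mem_box_partitions t n p :
  (p \in box_partitions t n) = (size p <= t)%N && partition_le n p.
Proof.
elim: t n p => [|t IHt] n p; first by case: p => [|x p] //=; rewrite inE.
elim: n p => [|n IHn] p.
  by case: p => [|x p] //=; rewrite inE //= leqn0; case: x => //=; rewrite andbF.
rewrite box_partitionsSS mem_cat IHn; case: p => [|x p] //=.
case: (eqVneq x n.+1) => [->|Hx].
  rewrite mem_map; last by move=> ? ? [].
  by rewrite IHt ltnS leqnn ltnn /=; case: (size p <= t)%N; case: (partition_le n.+1 p).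
have -> : (x :: p \in map (cons n.+1) (box_partitions t n.+1)) = false.
  by apply/negbTE/negP => /mapP [q _ [E _]]; rewrite E eqxx in Hx.
by rewrite orbF [(x <= n.+1)%N]leq_eqVlt (negbTE Hx) ltnS.
Qed.

Lemma uniq_box_partitions t n : uniq (box_partitions t n).
Proof.
elim: t n => [|t IHt] n //; elim: n => [|n IHn] //.
rewrite box_partitionsSS cat_uniq IHn map_inj_uniq ?IHt ?andbT; last by move=> ? ? [].
by apply/hasP => [[q /mapP [r _ ->]]]; rewrite mem_box_partitions /= ltnn andbF.
Qed.

Definition box_gf (t n : nat) : {poly int} :=
  \sum_(p <- box_partitions t n) 'X^(sumn p).

Lemma box_gfSS t n : box_gf t.+1 n.+1 = box_gf t.+1 n + 'X^(n.+1) * box_gf t n.+1.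
Proof.
rewrite /box_gf box_partitionsSS big_cat big_map /=; congr (_ + _).
by rewrite big_distrr; apply: eq_bigr => p _; rewrite exprD.
Qed.

Lemma box_gf_t0 t : box_gf t 0 = 1.
Proof. by case: t => [|t]; rewrite /box_gf /= big_seq1 expr0. Qed.

Lemma box_gf_0n n : box_gf 0 n = 1.
Proof. by rewrite /box_gf /= big_seq1 expr0. Qed.

Lemma qfactS m : qfact m.+1 = qfact m * qint m.+1.
Proof. by rewrite /qfact big_ord_recr. Qed.

Lemma qfact0 : qfact 0 = 1.
Proof. by rewrite /qfact big_ord0. Qed.

Lemma qintD m l : qint (m + l) = qint m + 'X^m * qint l.
Proof.
rewrite /qint big_split_ord; congr (_ + _).
by rewrite big_distrr; apply: eq_bigr => i _; rewrite exprD.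
Qed.

(* The box generating function is the q-binomial [n+t, n]_q, in the
   polynomial form [n]! [t]! F = [n+t]!. *)
Lemma box_gf_qfact t n : box_gf t n * qfact n * qfact t = qfact (n + t).
Proof.
elim: t n => [|t IHt] n; first by rewrite box_gf_0n qfact0 addn0 mul1r mulr1.
elim: n => [|n IHn]; first by rewrite box_gf_t0 qfact0 !mul1r add0n.
have IHt' := IHt n.+1; rewrite addSnnS in IHt'.
have -> : qfact (n.+1 + t.+1) = qfact (n + t.+1) * (qint n.+1 + 'X^(n.+1) * qint t.+1).
  by rewrite -qintD -qfactS addSn.
rewrite mulrDr -{1}IHn -IHt' box_gfSS !qfactS; ring.
Qed.

(* [m+1]_q evaluates to m+1 at q = 1, so q-factorials are nonzero. *)
Lemma qint_neq0 m : qint m.+1 != 0.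
Proof.
apply/negP => /eqP /(congr1 (fun p : {poly int} => p.[1])).
rewrite /qint horner_sum hornerC.
under eq_bigr do rewrite hornerXn expr1n.
by rewrite sumr_const cardT size_enum_ord => /eqP; rewrite pnatr_eq0.
Qed.

Lemma qfact_neq0 m : qfact m != 0.
Proof. by apply/prodf_neq0 => i _; apply: qint_neq0. Qed.

Lemma box_gf_qbinom t n : FracField.tofrac (box_gf t n) = qbinom (n + t) n.
Proof.
rewrite /qbinom addKn -(box_gf_qfact t n) !rmorphM /=.
rewrite -(mulrA (FracField.tofrac (box_gf t n))) mulfK //.
by rewrite mulf_neq0 // tofrac_eq0 qfact_neq0.
Qed.

Unset Implicit Arguments.

Theorem lemma3p8 (n a b t : nat) (mu : seq bool) :
  inL n a b mu ->
  passes_through (ptA a) mu (- (t%:Z), n%:Z + t%:Z) ->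
  exists Ts : seq (seq tile),
    [/\ (forall T, T \in Ts -> is_TD n a mu T),
        (forall T, is_TD n a mu T -> exists2 T', T' \in Ts & perm_eq T T'),
        pairwise (fun T1 T2 => ~~ perm_eq T1 T2) Ts &
        FracField.tofrac (\sum_(T <- Ts) 'X^(tnorm T) : {poly int}) = qbinom (n + t) n].
Proof.
move=> _ muP; have above := mu_above_Delta muP.
exists (map (level_tiling n 1) (box_partitions t n)); split.
- move=> _ /mapP [p + ->]; rewrite mem_box_partitions => /andP [Hs Hp].
  exact: level_tiling_TD above Hs Hp.
- move=> T /(TD_partition muP) [p [Hs Hp HT]].
  by exists (level_tiling n 1 p); rewrite ?map_f ?mem_box_partitions ?Hs.
- rewrite pairwise_map; have := uniq_box_partitions t n; rewrite uniq_pairwise.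
  apply: sub_pairwise => p1 p2 /= Hne; apply/negP => /level_tiling_perm_inj E.
  by rewrite E eqxx in Hne.
- rewrite big_map -box_gf_qbinom; congr FracField.tofrac.
  by apply: eq_bigr => p _; rewrite tnorm_level_tiling.
Qed.
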